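(* Let $d$ be a positive integer and let $A\in\mathbb{R}^{[3]\times[n]}$ be a matrix that cannot be eliminated at any column. Then there exists $b\in\mathbb{R}^{[3]}$ such that the solution graph $G(R(A,b))$ is not connected.
   Context: Fix a positive integer $d$ and let $D=\{0,1,\dots,d\}$; $[n]=\{1,\dots,n\}$. For $A\in\mathbb{R}^{[m]\times[n]}$ and $b\in\mathbb{R}^{[m]}$, $R(A,b)=\{x\in D^{[n]} : Ax\ge b\}$. For $R\subseteq D^{[n]}$, the solution graph $G(R)$ is the undirected graph with vertex set $R$ in which $x,y$ are adjacent iff they differ in exactly one coordinate. A matrix $A=(a_{ij})\in\mathbb{R}^{[m]\times[n]}$ can be eliminated at column $j\in[n]$ if (i) for every row $i$ with $a_{ij}>0$ we have $a_{ij'}=0$ for all $j'\in[n]\setminus\{j\}$, or (ii) for every row $i$ with $a_{ij}<0$ we have $a_{ij'}=0$ for all $j'\in[n]\setminus\{j\}$. *)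

From HB Require Import structures.
From mathcomp Require Import all_boot all_order all_algebra.
From mathcomp Require Import reals.
Set Implicit Arguments. Unset Strict Implicit. Unset Printing Implicit Defensive.
Import Order.TTheory GRing.Theory Num.Theory.
Local Open Scope ring_scope.

Definition point (d n : nat) := {ffun 'I_n -> 'I_d.+1}.

Definition solset (R : realType) (d m n : nat) (A : 'M[R]_(m, n)) (b : 'cV[R]_m)
  : {set point d n} :=
  [set x : point d n | [forall i : 'I_m,
     b i 0 <= \sum_(j < n) A i j * ((x j : nat)%:R)]].

Definition adjacent (d n : nat) (x y : point d n) : bool :=
  #|[set j : 'I_n | x j != y j]| == 1%N.

Definition solgraph_rel (d n : nat) (S : {set point d n}) : rel (point d n) :=
  fun x y => [&& x \in S, y \in S & adjacent x y].

Definition graph_connected (d n : nat) (S : {set point d n}) : Prop :=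
  forall x y, x \in S -> y \in S -> connect (solgraph_rel S) x y.

Definition eliminable (R : realType) (m n : nat) (A : 'M[R]_(m, n)) (j : 'I_n) : Prop :=
  (forall i : 'I_m, 0 < A i j -> forall j' : 'I_n, j' != j -> A i j' = 0) \/
  (forall i : 'I_m, A i j < 0 -> forall j' : 'I_n, j' != j -> A i j' = 0).

(* For distinct grid points x and y put b := min(Ax, Ay) componentwise: both
   points lie in R(A,b), and x is isolated in G(R(A,b)) as soon as every grid
   neighbour of x violates some row.  Take x a corner of D^n and y = x + e with
   e in {-1,0,1}^n pointing into the box.  A neighbour of x moves one coordinate
   l inward by t >= 1, changing row i by t times the inward-oriented entry
   A_il, so x is isolated if for every l some row has oriented entry below
   min(0, (Ae)_i).  On the support of e this is the condition [blocked A e].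
   Off the support it holds at any row with (Ae)_i >= 0 and A_il <> 0; such a
   row exists once two of the three rows have (Ae)_i >= 0, because every column
   of a non-eliminable matrix has entries of both signs.  Replacing e by -e if
   necessary, it suffices that e and -e are both blocked.  Such an e lives on
   two columns with opposite signs on a common pair of rows (a crossing); when
   there is no crossing, non-eliminability forces three columns with a cyclic
   sign pattern, which yields one as well. *)

From mathcomp Require Import all_boot all_order all_algebra.
From mathcomp Require Import reals lra.
Set Implicit Arguments.
Unset Strict Implicit.
Unset Printing Implicit Defensive.
Import Order.TTheory GRing.Theory Num.Theory.
Local Open Scope ring_scope.

Lemma sgr_opposite (R : realDomainType) (x y : R) :
  x * y < 0 -> Num.sg y * x < 0 /\ 0 < Num.sg y * y.
Proof.
move=> xy_lt0.
have y_neq0 : y != 0 by apply: contraTneq xy_lt0 => ->; rewrite mulr0 ltxx.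
have sy_gt0 : 0 < Num.sg y * y by rewrite -normrEsg normr_gt0.
have : (Num.sg y * x) * (Num.sg y * y) = x * y.
  by rewrite mulrACA -expr2 sqr_sg y_neq0 mul1r.
by split=> //; nra.
Qed.

Lemma mixed_opposite (R : realDomainType) m (c : 'I_m -> R) i :
  (exists i, 0 < c i) -> (exists i, c i < 0) -> c i != 0 ->
  exists i', c i * c i' < 0.
Proof.
move=> [p cp] [q cq]; rewrite neq_lt => /orP [ci|ci].
  by exists p; rewrite nmulr_rlt0.
by exists q; rewrite pmulr_rlt0.
Qed.

Lemma ord3_pairs_meet (a b c e : 'I_3) :
  a != b -> c != e -> [|| a == c, a == e, b == c | b == e].
Proof.
by case: a b c e => [[|[|[|?]]] ?] [[|[|[|?]]] ?] [[|[|[|?]]] ?] [[|[|[|?]]] ?].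
Qed.

Lemma ord3_same_sign (R : realDomainType) (w : 'I_3 -> R) :
  exists r1 r2, r1 != r2 /\ (0 <= w r1) = (0 <= w r2).
Proof.
have [e01|n01] := eqVneq (0 <= w 0) (0 <= w 1); first by exists 0, 1.
have [e02|n02] := eqVneq (0 <= w 0) (0 <= w 2); first by exists 0, 2.
exists 1, 2; split=> //.
by move: n01 n02; case: (0 <= w 0); case: (0 <= w 1); case: (0 <= w 2).
Qed.

Lemma ord3_other_exists (p q : 'I_3) : exists r : 'I_3, (r != p) && (r != q).
Proof.
by case: p q => [[|[|[|?]]] ?] [[|[|[|?]]] ?] //;
  first [by exists 0 | by exists 1 | by exists 2].
Qed.

Lemma ord3_other (p q r i : 'I_3) :
  p != q -> r != p -> r != q -> i != p -> i != q -> i == r.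
Proof.
by case: p q r i => [[|[|[|?]]] ?] [[|[|[|?]]] ?] [[|[|[|?]]] ?] [[|[|[|?]]] ?].
Qed.

Section SolutionGraph.
Variables (R : realType) (d m n : nat) (A : 'M[R]_(m, n)).

Definition ptcol (x : point d n) : 'cV[R]_n := \col_j (x j : nat)%:R.

Definition disconnectable : Prop :=
  exists b : 'cV[R]_m, ~ graph_connected (solset d A b).

Lemma in_solset x b :
  (x \in solset d A b) = [forall i, b i 0 <= (A *m ptcol x) i 0].
Proof.
rewrite inE; apply: eq_forallb => i; rewrite mxE.
by congr (_ <= _); apply: eq_bigr => j _; rewrite mxE.
Qed.

Lemma disconnectable_of_isolated x y : x != y ->
  (forall x', adjacent x x' -> exists i,
     (A *m ptcol x') i 0 < Num.min ((A *m ptcol x) i 0) ((A *m ptcol y) i 0)) ->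
  disconnectable.
Proof.
move=> neq_xy isolated_x.
pose b := \col_i Num.min ((A *m ptcol x) i 0) ((A *m ptcol y) i 0).
have xS : x \in solset d A b.
  by rewrite in_solset; apply/forallP => i; rewrite mxE ge_min lexx.
have yS : y \in solset d A b.
  by rewrite in_solset; apply/forallP => i; rewrite mxE ge_min lexx orbT.
exists b => /(_ x y xS yS) /connectP [[|x' p] /= path_p last_p].
  by rewrite last_p eqxx in neq_xy.
case/andP: path_p => /and3P [_ x'S adj_xx'] _.
have [i lt_i] := isolated_x x' adj_xx'.
by move: x'S; rewrite in_solset => /forallP /(_ i); rewrite mxE leNgt lt_i.
Qed.

Lemma adjacent_ptcol x x' : adjacent x x' -> exists2 l, x' l != x l &
  ptcol x' = ptcol x + (ptcol x' l 0 - ptcol x l 0) *: delta_mx l 0.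
Proof.
case/cards1P => l diff_l.
have neq_x j : (x j != x' j) = (j == l) by rewrite -in_set1 -diff_l inE.
exists l; first by rewrite eq_sym neq_x.
apply/matrixP => j k; rewrite ord1 !mxE eqxx andbT.
have [->|/negbTE ne_jl] := eqVneq j l; first by rewrite mulr1 addrC subrK.
by rewrite mulr0 addr0; move: ne_jl; rewrite -neq_x => /negbFE /eqP ->.
Qed.

Hypothesis d_gt0 : (0 < d)%N.

Definition corner (down : 'I_n -> bool) : point d n :=
  [ffun l => if down l then ord_max else ord0].

Lemma corner_shift (down : 'I_n -> bool) (e : 'cV[R]_n) :
  (forall l, e l 0 = 0 \/ e l 0 = (-1) ^+ down l) ->
  exists y, ptcol y = ptcol (corner down) + e.
Proof.
move=> e_sign.
exists [ffun l => if e l 0 == 0 then corner down l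
                  else if down l then inord d.-1 else inord 1].
apply/matrixP => l k; rewrite ord1 !mxE !ffunE.
have [->|e_l] := eqVneq (e l 0) 0; first by rewrite addr0.
have le_pred : (d.-1 <= d)%N by rewrite leq_pred.
case: (e_sign l) e_l => [-> /eqP //|-> _].
case: (down l) => /=.
  by rewrite inordK ?ltnS // -{2}(prednK d_gt0) -addn1 natrD expr1 addrK.
by rewrite inordK ?ltnS // add0r.
Qed.

Lemma corner_move (down : 'I_n -> bool) (x' : point d n) l :
  x' l != corner down l ->
  1 <= (-1) ^+ down l * (ptcol x' l 0 - ptcol (corner down) l 0).
Proof.
rewrite !mxE ffunE; case: (down l) => neq_x'l /=; last first.
  rewrite subr0 mul1r ler1n lt0n.
  by apply: contra neq_x'l => /eqP x'l0; apply/eqP/val_inj.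
have : (x' l + 1 <= d)%N.
  rewrite addn1 ltn_neqAle -ltnS ltn_ord andbT.
  by apply: contra neq_x'l => /eqP x'ld; apply/eqP/val_inj.
by rewrite -(ler_nat R) natrD expr1 mulN1r; lra.
Qed.

Lemma disconnectable_of_corner (down : 'I_n -> bool) (e : 'cV[R]_n) :
  e != 0 -> (forall l, e l 0 = 0 \/ e l 0 = (-1) ^+ down l) ->
  (forall l, exists i, (-1) ^+ down l * A i l < Num.min 0 ((A *m e) i 0)) ->
  disconnectable.
Proof.
move=> nz_e e_sign blocked_down.
have [y def_y] := corner_shift e_sign.
apply: (@disconnectable_of_isolated (corner down) y).
  apply: contraNneq nz_e => eq_xy; apply/eqP/(addrI (ptcol (corner down))).
  by rewrite addr0 -def_y eq_xy.
move=> x' /adjacent_ptcol [l /corner_move move_ge1 ->].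
have [i] := blocked_down l; set t := _ - _ in move_ge1 *.
set s := (-1) ^+ down l in move_ge1 *; move=> lt_sA.
have lt_tA : t * A i l < Num.min 0 ((A *m e) i 0).
  have -> : t * A i l = (s * t) * (s * A i l).
    by rewrite mulrACA -signr_addb addbb mul1r.
  move: (s * t) (s * A i l) move_ge1 lt_sA => u v ge1_u.
  by rewrite !lt_min => /andP [lt0_v ltw_v]; apply/andP; split; nra.
exists i; rewrite def_y !mulmxDr -scalemxAr -colE.
by move: lt_tA; rewrite !mxE !lt_min gtrDl ltrD2l.
Qed.

End SolutionGraph.

Section Blocked.
Variables (R : realType) (m n : nat) (A : 'M[R]_(m, n)).

Definition blocked (e : 'cV[R]_n) : Prop :=
  forall l, e l 0 != 0 -> exists i, e l 0 * A i l < Num.min 0 ((A *m e) i 0).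

Lemma blocked_pair (a b : R) j k i i' :
  a * A i j < 0 -> 0 < a * A i' j -> b * A i' k < 0 -> 0 < b * A i k ->
  j != k -> blocked (a *: delta_mx j 0 + b *: delta_mx k 0).
Proof.
move=> aij ai'j bi'k bik ne_jk l.
rewrite mulmxDr -!scalemxAr -!colE !mxE !eqxx !andbT.
have [-> _|_] := eqVneq l j.
  exists i; rewrite (negbTE ne_jk) !mxE mulr1 mulr0 addr0 lt_min.
  by apply/andP; split; lra.
have [-> _|_] := eqVneq l k; last by rewrite !mulr0 addr0 eqxx.
exists i'; rewrite !mxE mulr1 mulr0 add0r lt_min.
by apply/andP; split; lra.
Qed.

Lemma blocked_cycle (a b c : R) j k k' p q r :
  a * A q j < 0 -> 0 < a * A p j -> A r j = 0 ->
  b * A p k < 0 -> 0 < b * A r k -> A q k = 0 ->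
  c * A r k' < 0 -> 0 < c * A q k' -> A p k' = 0 ->
  j != k -> j != k' -> k != k' ->
  blocked (a *: delta_mx j 0 + b *: delta_mx k 0 + c *: delta_mx k' 0).
Proof.
move=> aqj apj rj bpk brk qk crk' cqk' pk' ne_jk ne_jk' ne_kk' l.
rewrite !mulmxDr -!scalemxAr -!colE !mxE !eqxx !andbT.
have [-> _|_] := eqVneq l j.
  exists q; rewrite (negbTE ne_jk) (negbTE ne_jk') !mxE qk.
  by rewrite mulr1 !mulr0 !addr0 lt_min; apply/andP; split; lra.
have [-> _|_] := eqVneq l k.
  exists p; rewrite (negbTE ne_kk') !mxE pk'.
  by rewrite mulr1 !mulr0 add0r addr0 lt_min; apply/andP; split; lra.
have [-> _|_] := eqVneq l k'; last by rewrite !mulr0 !addr0 eqxx.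
exists r; rewrite !mxE rj.
by rewrite mulr1 !mulr0 !add0r lt_min; apply/andP; split; lra.
Qed.

End Blocked.

Section NotEliminable.
Variables (R : realType) (m n : nat) (A : 'M[R]_(m, n)).

Lemma not_eliminable_sign l (s : bool) : ~ eliminable A l ->
  exists i, 0 < (-1) ^+ s * A i l /\ exists2 k, k != l & A i k != 0.
Proof.
move=> not_elim.
pose witness i := (0 < (-1) ^+ s * A i l) && [exists k, (k != l) && (A i k != 0)].
case: (pickP witness) => [i /andP [pos /existsP [k /andP [ne_kl nz]]]|none].
  by exists i; split; last exists k.
have zero_row i : 0 < (-1) ^+ s * A i l -> forall k, k != l -> A i k = 0.
  move=> pos k ne_kl; apply/eqP.
  move: (none i); rewrite /witness pos /= => /existsPn /(_ k).
  by rewrite ne_kl negbK.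
case: not_elim; clear witness none.
case: s zero_row => zero_row; [right | left] => i Ail; apply: zero_row.
  by rewrite expr1 mulN1r oppr_gt0.
by rewrite mul1r.
Qed.

Lemma mixed_of_not_eliminable l : ~ eliminable A l ->
  (exists i, 0 < A i l) /\ (exists i, A i l < 0).
Proof.
move=> not_elim; split.
  have [i [pos _]] := not_eliminable_sign false not_elim.
  by exists i; rewrite mul1r in pos.
have [i [pos _]] := not_eliminable_sign true not_elim.
by exists i; rewrite expr1 mulN1r oppr_gt0 in pos.
Qed.

Lemma not_eliminable_same_sign l r : ~ eliminable A l -> A r l != 0 ->
  exists i, 0 < A r l * A i l /\ exists2 k, k != l & A i k != 0.
Proof.
move=> not_elim nz_r.
have [i [pos other]] := not_eliminable_sign (A r l < 0)%R not_elim.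
exists i; split=> //.
have -> : A r l * A i l = `|A r l| * ((-1) ^+ (A r l < 0)%R * A i l).
  by rewrite normrEsign mulrACA -signr_addb addbb mul1r.
by rewrite mulr_gt0 // normr_gt0.
Qed.

End NotEliminable.

Section ThreeRows.
Variables (R : realType) (d n : nat) (A : 'M[R]_(3, n)).
Hypothesis d_gt0 : (0 < d)%N.
Hypothesis mixedA : forall l, (exists i, 0 < A i l) /\ (exists i, A i l < 0).

(* The entries of e lie in {-1, 0, 1}. *)
Definition sign_vector (e : 'cV[R]_n) : Prop := forall l, Num.sg (e l 0) = e l 0.

Lemma orientation_of_zero_column (c w : 'I_3 -> R) r1 r2 :
  r1 != r2 -> 0 <= w r1 -> 0 <= w r2 ->
  (exists i, 0 < c i) -> (exists i, c i < 0) ->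
  exists (b : bool) i, (-1) ^+ b * c i < Num.min 0 (w i).
Proof.
move=> ne_r w1 w2 [p cp] [q cq].
have ne_pq : p != q by apply: contraTneq cp => ->; rewrite ltNge ltW.
have [i [wi ci]] : exists i, 0 <= w i /\ c i != 0.
  case/or4P: (ord3_pairs_meet ne_r ne_pq) => /eqP eq_r;
    [exists r1 | exists r1 | exists r2 | exists r2];
    by split; rewrite // eq_r ?(lt0r_neq0 cp) ?(ltr0_neq0 cq).
exists (0 < c i), i; rewrite (min_idPl wi).
have [ci_gt0|ci_le0] := ltrP 0 (c i); first by rewrite expr1 mulN1r oppr_lt0.
by rewrite expr0 mul1r lt_neqAle ci.
Qed.

Lemma disconnectable_of_blocked (e : 'cV[R]_n) :
  sign_vector e -> e != 0 -> blocked A e -> blocked A (- e) ->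
  disconnectable d A.
Proof.
wlog: e / exists r1 r2, [/\ r1 != r2, 0 <= (A *m e) r1 0 & 0 <= (A *m e) r2 0].
  move=> gen sg_e nz_e be bne.
  have [r1 [r2 [ne_r]]] := ord3_same_sign (fun i => (A *m e) i 0).
  have [w1 w2|w1 w2] := lerP 0 ((A *m e) r1 0).
    by apply: gen => //; exists r1, r2; split.
  apply: (gen (- e)); rewrite ?opprK ?oppr_eq0 //.
  - have {}w2 : (A *m e) r2 0 < 0 by rewrite ltNge -w2.
    by exists r1, r2; split; rewrite // mulmxN mxE oppr_ge0 ltW.
  - by move=> l; rewrite mxE sgrN sg_e.
move=> [r1 [r2 [ne_r w1 w2]]] sg_e nz_e be _.
have orient l : exists down : bool,
    (e l 0 = 0 \/ e l 0 = (-1) ^+ down) /\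
    exists i, (-1) ^+ down * A i l < Num.min 0 ((A *m e) i 0).
  have [e0|nz] := eqVneq (e l 0) 0.
    have [mix_pos mix_neg] := mixedA l.
    have [b [i lt_i]] := orientation_of_zero_column
      (w := fun i => (A *m e) i 0) ne_r w1 w2 mix_pos mix_neg.
    by exists b; split; [left | exists i].
  have e_sign : e l 0 = (-1) ^+ (e l 0 < 0)%R by rewrite neqr0_sign // sg_e.
  by exists (e l 0 < 0)%R; rewrite -e_sign; split; [right | apply: be].
have [down orient_down] := fin_all_exists orient.
by apply: (disconnectable_of_corner d_gt0 (down := down) nz_e) => l;
  case: (orient_down l).
Qed.

Lemma disconnectable_of_crossing j k i i' :
  j != k -> A i j * A i' j < 0 -> A i k * A i' k < 0 -> disconnectable d A.
Proof.
move=> ne_jk /sgr_opposite [aij ai'j]; rewrite mulrC => /sgr_opposite [bi'k bik].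
set a := Num.sg (A i' j) in aij ai'j; set b := Num.sg (A i k) in bi'k bik.
pose e : 'cV[R]_n := a *: delta_mx j 0 + b *: delta_mx k 0.
have e_l l : e l 0 = a * (l == j)%:R + b * (l == k)%:R.
  by rewrite !mxE !eqxx !andbT.
apply: (@disconnectable_of_blocked e).
- move=> l; rewrite e_l; have [->|_] := eqVneq l j.
    by rewrite (negbTE ne_jk) mulr1 mulr0 addr0 sgr_id.
  by rewrite mulr0 add0r; case: (l == k); rewrite ?mulr1 ?mulr0 ?sgr_id ?sgr0.
- apply/eqP => /matrixP /(_ j 0) /eqP.
  rewrite e_l mxE eqxx (negbTE ne_jk) mulr1 mulr0 addr0 => /eqP a0.
  by rewrite a0 mul0r ltxx in aij.
- exact: (blocked_pair aij ai'j bi'k bik ne_jk).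
- rewrite opprD -!scaleNr; apply: (blocked_pair (i := i') (i' := i));
    by rewrite ?mulNr ?oppr_lt0 ?oppr_gt0.
Qed.

Lemma disconnectable_of_cycle j k k' p q r :
  A q j * A p j < 0 -> A p k * A r k < 0 -> A r k' * A q k' < 0 ->
  A r j = 0 -> A q k = 0 -> A p k' = 0 -> disconnectable d A.
Proof.
move=> /sgr_opposite [aqj apj] /sgr_opposite [bpk brk] /sgr_opposite [crk' cqk'].
move=> rj qk pk'.
have ne_jk : j != k by apply: contraTneq brk => <-; rewrite rj mulr0 ltxx.
have ne_jk' : j != k' by apply: contraTneq crk' => <-; rewrite rj mulr0 ltxx.
have ne_kk' : k != k' by apply: contraTneq cqk' => <-; rewrite qk mulr0 ltxx.
set a := Num.sg (A p j) in aqj apj; set b := Num.sg (A r k) in bpk brk.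
set c := Num.sg (A q k') in crk' cqk'.
pose e : 'cV[R]_n := a *: delta_mx j 0 + b *: delta_mx k 0 + c *: delta_mx k' 0.
have e_l l : e l 0 = a * (l == j)%:R + b * (l == k)%:R + c * (l == k')%:R.
  by rewrite !mxE !eqxx !andbT.
apply: (@disconnectable_of_blocked e).
- move=> l; rewrite e_l; have [->|_] := eqVneq l j.
    by rewrite (negbTE ne_jk) (negbTE ne_jk') mulr1 !mulr0 !addr0 sgr_id.
  have [->|_] := eqVneq l k.
    by rewrite (negbTE ne_kk') mulr1 !mulr0 add0r addr0 sgr_id.
  by rewrite !mulr0 !add0r; case: (l == k'); rewrite ?mulr1 ?mulr0 ?sgr_id ?sgr0.
- apply/eqP => /matrixP /(_ j 0) /eqP.
  rewrite e_l mxE eqxx (negbTE ne_jk) (negbTE ne_jk') mulr1 !mulr0 !addr0.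
  by move=> /eqP a0; rewrite a0 mul0r ltxx in aqj.
- exact: blocked_cycle aqj apj rj bpk brk qk crk' cqk' pk' ne_jk ne_jk' ne_kk'.
(* -e has the same sign pattern, with p, q and k, k' exchanged. *)
- rewrite !opprD -!scaleNr addrAC.
  apply: (blocked_cycle (p := q) (q := p) (r := r));
    by rewrite ?mulNr ?oppr_lt0 ?oppr_gt0 // eq_sym.
Qed.

End ThreeRows.

Definition crossing (R : realType) m n (A : 'M[R]_(m, n)) : bool :=
  [exists j, exists k, exists i, exists i',
     [&& j != k, A i j * A i' j < 0 & A i k * A i' k < 0]].

Section NoCrossing.
Variables (R : realType) (n : nat) (A : 'M[R]_(3, n)).
Hypothesis not_elimA : forall l, ~ eliminable A l.
Hypothesis no_crossingA : ~~ crossing A.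

Lemma no_crossing j k i i' :
  j != k -> A i j * A i' j < 0 -> A i k * A i' k < 0 -> False.
Proof.
move=> ne_jk opp_j opp_k; case/negP: no_crossingA.
by apply/existsP; exists j; apply/existsP; exists k; apply/existsP; exists i;
  apply/existsP; exists i'; apply/and3P.
Qed.

Lemma opposite_third l p q r : p != q -> r != p -> r != q ->
  A p l != 0 -> ~~ (A p l * A q l < 0) -> A p l * A r l < 0.
Proof.
move=> ne_pq ne_rp ne_rq nz_p not_opp_q.
have [mix_pos mix_neg] := mixed_of_not_eliminable (@not_elimA l).
have [i opp_i] := mixed_opposite mix_pos mix_neg nz_p.
have ne_ip : i != p.
  by apply: contraTneq opp_i => ->; rewrite -expr2 ltNge sqr_ge0.
have ne_iq : i != q by apply: contraNneq not_opp_q => <-.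
by rewrite -(eqP (ord3_other ne_pq ne_rp ne_rq ne_ip ne_iq)).
Qed.

Lemma not_opposite_both l p q r : p != q -> r != p -> r != q ->
  A r l * A p l < 0 -> A r l * A q l < 0 -> False.
Proof.
move=> ne_pq ne_rp ne_rq opp_p opp_q.
have nz_r : A r l != 0 by apply: contraTneq opp_p => ->; rewrite mul0r ltxx.
have [i [same [k ne_kl nz_ik]]] := not_eliminable_same_sign (@not_elimA l) nz_r.
rewrite eq_sym in ne_kl.
have ne_ip : i != p by apply: contraTneq same => ->; rewrite ltNge ltW.
have ne_iq : i != q by apply: contraTneq same => ->; rewrite ltNge ltW.
have /eqP eq_ir := ord3_other ne_pq ne_rp ne_rq ne_ip ne_iq; subst i.
have [mix_pos mix_neg] := mixed_of_not_eliminable (@not_elimA k).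
have [i' opp_i'] := mixed_opposite mix_pos mix_neg nz_ik.
have ne_i'r : i' != r.
  by apply: contraTneq opp_i' => ->; rewrite -expr2 ltNge sqr_ge0.
have [eq_i'p | ne_i'p] := eqVneq i' p.
  by apply: no_crossing ne_kl opp_p _; rewrite -eq_i'p.
have /eqP eq_i'q : i' == q by apply: ord3_other ne_i'p ne_i'r; rewrite eq_sym.
by apply: no_crossing ne_kl opp_q _; rewrite -eq_i'q.
Qed.

Lemma half_cycle j k p q r : p != q -> r != p -> r != q -> j != k ->
  A p j * A q j < 0 -> A p k != 0 -> A p k * A r k < 0 /\ A q k = 0.
Proof.
move=> ne_pq ne_rp ne_rq ne_jk opp_j nz_pk.
have opp_pr : A p k * A r k < 0.
  apply: (opposite_third ne_pq ne_rp ne_rq nz_pk); apply/negP.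
  exact: no_crossing ne_jk opp_j.
split=> //; apply/eqP; apply: contraT => nz_qk.
have ne_qp : q != p by rewrite eq_sym.
have opp_qr : A q k * A r k < 0.
  apply: (opposite_third ne_qp ne_rq ne_rp nz_qk); apply/negP; rewrite mulrC.
  exact: no_crossing ne_jk opp_j.
by case: (not_opposite_both ne_pq ne_rp ne_rq (l := k)); rewrite mulrC.
Qed.

Lemma cycle_of_no_crossing j : exists k k' p q r,
  [/\ A q j * A p j < 0, A p k * A r k < 0 & A r k' * A q k' < 0] /\
  [/\ A r j = 0, A q k = 0 & A p k' = 0].
Proof.
have [p [pj [k ne_kj nz_pk]]] := not_eliminable_sign false (@not_elimA j).
have [q [qj [k' ne_k'j nz_qk']]] := not_eliminable_sign true (@not_elimA j).
rewrite mul1r in pj; rewrite expr1 mulN1r oppr_gt0 in qj.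
rewrite eq_sym in ne_kj; rewrite eq_sym in ne_k'j.
have opp_pq : A p j * A q j < 0 by rewrite pmulr_rlt0.
have opp_qp : A q j * A p j < 0 by rewrite mulrC.
have ne_pq : p != q by apply: contraTneq pj => ->; rewrite ltNge ltW.
have [r /andP [ne_rp ne_rq]] := ord3_other_exists p q.
have [opp_prk qk] := half_cycle ne_pq ne_rp ne_rq ne_kj opp_pq nz_pk.
have ne_qp : q != p by rewrite eq_sym.
have [opp_qrk' pk'] := half_cycle ne_qp ne_rq ne_rp ne_k'j opp_qp nz_qk'.
exists k, k', p, q, r; split; split=> //; first by rewrite mulrC.
have [rj_lt0|rj_gt0|//] := ltrgtP (A r j) 0; exfalso.
  by apply: no_crossing ne_kj _ opp_prk; rewrite pmulr_rlt0.
by apply: no_crossing ne_k'j _ opp_qrk'; rewrite nmulr_rlt0.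
Qed.

End NoCrossing.

Theorem lemma6 (R : realType) (d n : nat) (hd : (0 < d)%N) (hn : (0 < n)%N)
  (A : 'M[R]_(3, n)) (hA : forall j : 'I_n, ~ eliminable A j) :
  exists b : 'cV[R]_3, ~ graph_connected (solset d A b).
Proof.
have mixedA l := mixed_of_not_eliminable (hA l).
have [|no_cross] := boolP (crossing A).
  case/existsP=> j /existsP [k /existsP [i /existsP [i']]].
  case/and3P=> ne_jk opp_j opp_k.
  exact: (disconnectable_of_crossing hd mixedA ne_jk opp_j opp_k).
have [k [k' [p [q [r [[opp_j opp_k opp_k'] [rj qk pk']]]]]]] :=
  cycle_of_no_crossing hA no_cross (Ordinal hn).
exact: (disconnectable_of_cycle hd mixedA opp_j opp_k opp_k' rj qk pk').
Qed.
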